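(* Let $\theta\in(\mathbb{R}^N_{>0})^R$ and $w\in\mathbb{R}^N_{>0}$ be positive vectors. Let $y\in\mathcal{B}$ and let $z$ be a point of the base polytope of the submodular function $F=\sum_{r\in[R]}F_r$. Then there exists $\xi\in\mathcal{B}$ such that $A\xi=z$ and $$\|\xi-y\|_{2,\theta}\le\sqrt{\tfrac{\|\theta\|_{1,\infty}}{2}}\,\|Ay-z\|_1 .$$ Moreover, $\|\xi-y\|_{2,\theta}\le\sqrt{\tfrac{\|\theta\|_{1,\infty}\,\|w^{-1}\|_1}{2}}\,\|Ay-z\|_{2,w}$, where $w^{-1}=(w_1^{-1},\dots,w_N^{-1})$.
   Context: Let $N,R$ be positive integers and $[N]=\{1,\dots,N\}$. For each $r\in[R]$, $F_r:2^{[N]}\to\mathbb{R}$ is a submodular function with $F_r(\emptyset)=0$. For $z\in\mathbb{R}^N$ and $S\subseteq[N]$, $z(S)=\sum_{i\in S}z_i$. The base polytope of a normalized submodular $G$ on $[N]$ is $\{u\in\mathbb{R}^N: u(S)\le G(S)\ \forall S\subseteq[N],\ u([N])=G([N])\}$; $\mathcal{B}_r$ denotes the base polytope of $F_r$ and $\mathcal{B}=\mathcal{B}_1\times\cdots\times\mathcal{B}_R\subseteq(\mathbb{R}^N)^R$, with elements $y=(y_1,\dots,y_R)$ and $y_{r,i}$ the $i$-th coordinate of $y_r$. The linear map $A:(\mathbb{R}^N)^R\to\mathbb{R}^N$ is $Ay=\sum_{r}y_r$. An element $i\in[N]$ is incident to $F_r$ if there is $S\subseteq[N]\setminus\{i\}$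 with $F_r(S\cup\{i\})\neq F_r(S)$; $S_r$ is the set of elements incident to $F_r$. Assume every $i\in[N]$ lies in at least one $S_r$. For $w\in\mathbb{R}^N_{\ge 0}$, $\|z\|_{2,w}=\sqrt{\sum_i w_iz_i^2}$; for $\theta=(\theta_1,\dots,\theta_R)\in(\mathbb{R}^N_{\ge0})^R$ and $y\in(\mathbb{R}^N)^R$, $\|y\|_{2,\theta}=\sqrt{\sum_r\|y_r\|_{2,\theta_r}^2}$, and $\|\theta\|_{1,\infty}=\sum_{i\in[N]}\max_{r\in[R]:\,i\in S_r}\theta_{r,i}$. *)

From HB Require Import structures.
From mathcomp Require Import all_boot all_order all_algebra.
Set Implicit Arguments. Unset Strict Implicit. Unset Printing Implicit Defensive.
Import Order.TTheory GRing.Theory Num.Theory.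
Local Open Scope ring_scope.

Section Defs.
Variables (K : rcfType) (N : nat).

Definition vecN := 'I_N -> K.

Definition setsum (z : vecN) (S : {set 'I_N}) : K := \sum_(i in S) z i.

Definition normalized (G : {set 'I_N} -> K) : Prop := G set0 = 0.

Definition submodular (G : {set 'I_N} -> K) : Prop :=
  forall A B : {set 'I_N}, G (A :|: B) + G (A :&: B) <= G A + G B.

Definition in_base (G : {set 'I_N} -> K) (u : vecN) : Prop :=
  (forall S : {set 'I_N}, setsum u S <= G S) /\ setsum u [set: 'I_N] = G [set: 'I_N].

Definition incident (G : {set 'I_N} -> K) (i : 'I_N) : bool :=
  [exists S : {set 'I_N}, (i \notin S) && (G (i |: S) != G S)].

Definition norm1 (z : vecN) : K := \sum_i `|z i|.

Definition norm2w (w z : vecN) : K := Num.sqrt (\sum_i w i * z i ^+ 2).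

End Defs.

Section Prod.
Variables (K : rcfType) (N M : nat).
(* M plays the role of R (number of functions) *)

Definition sumF (F : 'I_M -> {set 'I_N} -> K) : {set 'I_N} -> K :=
  fun S => \sum_r F r S.

Definition Aop (y : 'I_M -> 'I_N -> K) : 'I_N -> K := fun i => \sum_r y r i.

Definition norm2theta (theta y : 'I_M -> 'I_N -> K) : K :=
  Num.sqrt (\sum_r \sum_i theta r i * y r i ^+ 2).

(* ||theta||_{1,infty} = sum_i max_{r : i in S_r} theta_{r,i}; the max is
   iterated Num.max starting from 0, which is harmless since theta >= 0 and
   every i is incident to some F_r. *)
Definition norm1inf (F : 'I_M -> {set 'I_N} -> K) (theta : 'I_M -> 'I_N -> K) : K :=
  \sum_i \big[Num.max/0]_(r | incident (F r) i) theta r i.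

End Prod.

From HB Require Import structures.
From mathcomp Require Import all_boot all_order all_algebra.
From mathcomp Require Import ring lra.
From Stdlib Require Import ClassicalEpsilon FunctionalExtensionality Classical.
Set Implicit Arguments. Unset Strict Implicit. Unset Printing Implicit Defensive.
Import Order.TTheory GRing.Theory Num.Theory.
Local Open Scope ring_scope.

(* Take [xi] maximising, over the product of base polytopes, the mass
   [Pi(xi)] moved from [A y] towards [z] on the coordinates where [z > A y],
   subject to every column sum staying between [A y] and [z] and to
   [|sum_(r in W) (xi r k - y r k)| <= Pi(xi)] for every column [k] and set of
   rows [W]; this bounded linear program is feasible at [y], so it has an optimum.
   At an optimum [A xi = z]: if [(A xi) i < z i], the elements from which [i]
   is reachable in the exchange graph of [xi] form a set that is tight for
   every [F r], so it contains some [j] with [(A xi) j > z j]; pushing a unit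
   of flow along a simple path from [j] to [i] keeps the active constraints
   satisfied to first order (each partial column sum moves by at most 1) and
   raises [Pi] by 1. Then [Pi(xi) = |A y - z|_1 / 2], the [W]-constraints give
   [sum_r (xi r k - y r k)^2 <= 2 Pi(xi)^2] in every column, and weighting by
   [theta] gives the first bound; Cauchy-Schwarz gives the second. *)

Section AffineFunctions.
Variables (K : realFieldType) (I : finType).

Definition vec := I -> K.
Definition vzero : vec := fun _ => 0.
Definition shift (x d : vec) (t : K) : vec := fun v => x v + t * d v.
Definition lin (h : vec -> K) (d : vec) := h d - h vzero.
Definition affine (h : vec -> K) := forall x d t, h (shift x d t) = h x + t * lin h d.

Lemma shiftE x d t v : shift x d t v = x v + t * d v. Proof. by []. Qed.

Implicit Types (h g : vec -> K).

Lemma affine_const c : affine (fun _ => c).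
Proof. by move=> x d t; rewrite /lin subrr mulr0 addr0. Qed.

Lemma affine_coord v : affine (fun x => x v).
Proof. by move=> x d t; rewrite /lin /vzero shiftE subr0. Qed.

Lemma affineD h g : affine h -> affine g -> affine (fun x => h x + g x).
Proof. by move=> ah ag x d t; rewrite ah ag /lin; ring. Qed.

Lemma affineN h : affine h -> affine (fun x => - h x).
Proof. by move=> ah x d t; rewrite ah /lin; ring. Qed.

Lemma affineB h g : affine h -> affine g -> affine (fun x => h x - g x).
Proof. by move=> ah ag; apply: affineD => //; apply: affineN. Qed.

Lemma affineZ c h : affine h -> affine (fun x => c * h x).
Proof. by move=> ah x d t; rewrite ah /lin; ring. Qed.

Lemma affine_sum (T : Type) (s : seq T) (P : pred T) (H : T -> vec -> K) :
  (forall i, affine (H i)) -> affine (fun x => \sum_(i <- s | P i) H i x).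
Proof.
move=> ah x d t; rewrite /lin.
rewrite (eq_bigr (fun i => H i x + t * (H i d - H i vzero))) => [|i _]; last exact: ah.
by rewrite big_split /= -mulr_sumr -sumrB.
Qed.

End AffineFunctions.
Arguments vzero {K I}.

(* Every feasible point descends to a vertex, and a vertex is determined by its
   active set, so there are finitely many of them to compare. *)
Section AffineProgram.
Variables (K : realFieldType) (I J : finType).
Variables (h : J -> vec K I -> K) (f : vec K I -> K).
Hypotheses (haff : forall j, affine (h j)) (faff : affine f).

Definition feasible x := forall j, h j x <= 0.
Definition active x : {set J} := [set j | h j x == 0].
Definition vertex x := forall d, (forall j, j \in active x -> lin (h j) d = 0) -> d = vzero.

Hypothesis bounded : forall v, exists B, forall x, feasible x -> `|x v| <= B.

Lemma feasible_shift x d : feasible x -> (forall j, h j x = 0 -> lin (h j) d <= 0) ->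
  exists2 eps, 0 < eps & feasible (shift x d eps).
Proof.
move=> fx hd; pose p j := (h j x < 0) && (0 < lin (h j) d).
have [/existsP [j pj]|nP] := boolP [exists j, p j]; last first.
  exists 1 => // j; rewrite haff mul1r.
  have [/eqP hj0|hj0] := boolP (h j x == 0); first by rewrite hj0 add0r; apply: hd.
  have hjlt : h j x < 0 by rewrite lt_neqAle hj0 fx.
  have : ~~ p j by apply: contraNN nP => pj; apply/existsP; exists j.
  by rewrite /p hjlt /= -leNgt; lra.
have [j0 /andP[h0 l0] Hmin] := arg_minP (fun j => - h j x / lin (h j) d) pj.
set eps := - h j0 x / lin (h j0) d.
have eps0 : 0 < eps by apply: divr_gt0; lra.
exists eps => // k; rewrite haff.
have [/eqP hk0|hk0] := boolP (h k x == 0).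
  by rewrite hk0 add0r; apply: mulr_ge0_le0; [exact: ltW | apply: hd].
have hklt : h k x < 0 by rewrite lt_neqAle hk0 fx.
have [lk|lk] := leP (lin (h k) d) 0; first by have := mulr_ge0_le0 (ltW eps0) lk; lra.
have := Hmin k; rewrite /p hklt lk => /(_ isT); rewrite -/eps ler_pdivlMr //; lra.
Qed.

Lemma ray_bounded x d : (forall t, 0 <= t -> feasible (shift x d t)) -> d = vzero.
Proof.
move=> ray; apply: functional_extensionality => v; apply: NNPP => dv.
have [B HB] := bounded v.
have dvp : 0 < `|d v| by rewrite normr_gt0; apply/eqP.
have B0 : 0 <= B by apply: le_trans (HB _ (ray 0 (lexx 0))).
pose t := (B + `|x v| + 1) / `|d v|.
have t0 : 0 <= t by apply: divr_ge0 => //; have := normr_ge0 (x v); lra.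
have tdv : `|t * d v| = B + `|x v| + 1 by rewrite normrM ger0_norm // mulfVK ?gt_eqF.
have := HB _ (ray t t0); have := lerB_normD (t * d v) (x v).
by rewrite shiftE (addrC (x v)); lra.
Qed.

Lemma descent_step x d : feasible x -> d <> vzero ->
  (forall j, j \in active x -> lin (h j) d = 0) -> lin f d <= 0 ->
  exists x', [/\ feasible x', f x' <= f x & (#|~: active x'| < #|~: active x|)%N].
Proof.
move=> fx dn0 hd fd; pose p j := 0 < lin (h j) d.
have [/existsP [j pj]|nP] := boolP [exists j, p j]; last first.
  exfalso; apply: dn0; apply: (ray_bounded (x := x)) => t t0 k; rewrite haff.
  have : ~~ p k by apply: contraNN nP => pk; apply/existsP; exists k.
  rewrite /p -leNgt => hk; have := mulr_ge0_le0 t0 hk; have := fx k; lra.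
have [j0 pj0 Hmin] := arg_minP (fun j => - h j x / lin (h j) d) pj.
set lam := - h j0 x / lin (h j0) d.
have lam0 : 0 <= lam by apply: divr_ge0; [have := fx j0; lra | exact: ltW].
exists (shift x d lam); split.
- move=> k; rewrite haff; have [pk|] := boolP (p k).
    by have := Hmin k pk; rewrite -/lam ler_pdivlMr //; lra.
  rewrite /p -leNgt => hk; have := mulr_ge0_le0 lam0 hk; have := fx k; lra.
- by rewrite faff; have := mulr_ge0_le0 lam0 fd; lra.
apply: proper_card; apply/properP; split.
  apply/subsetP => k; rewrite !inE; apply: contraNN => /eqP hk.
  by rewrite haff hk hd ?inE ?hk // mulr0 addr0.
exists j0; first by rewrite !inE; apply/eqP => hj0; move: pj0; rewrite /p hd ?inE ?hj0 ?ltxx.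
by rewrite !inE negbK haff /lam divfK ?addrN // gt_eqF.
Qed.

Lemma nonvertex_step x : feasible x -> ~ vertex x ->
  exists x', [/\ feasible x', f x' <= f x & (#|~: active x'| < #|~: active x|)%N].
Proof.
move=> fx nvx.
have [d [hd dn0]] : exists d, (forall j, j \in active x -> lin (h j) d = 0) /\ d <> vzero.
  by apply: NNPP => nex; apply: nvx => d hd; apply: NNPP => dn; apply: nex; exists d.
pose s : K := if lin f d <= 0 then 1 else -1.
have s2 : s != 0 by rewrite /s; case: ifP => _; rewrite ?oppr_eq0 oner_eq0.
have linZ g : affine g -> lin g (shift (vzero) d s) = s * lin g d.
  by move=> ag; rewrite {1}/lin ag addrC addKr.
apply: (descent_step (d := shift (vzero) d s)) => //.
- move=> ds; apply: dn0; apply: functional_extensionality => v.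
  by have /eqP := congr1 (fun u => u v) ds; rewrite shiftE add0r mulf_eq0 (negbTE s2) => /eqP.
- by move=> j ja; rewrite linZ // hd // mulr0.
by rewrite linZ // /s; case: ifP => H; lra.
Qed.

Lemma descend_to_vertex x : feasible x ->
  exists x', [/\ feasible x', f x' <= f x & vertex x'].
Proof.
move: {2}#|~: active x| (leqnn #|~: active x|) => n.
elim: n x => [|n IH] x hn fx; have [vx|nvx] := classic (vertex x);
  try by exists x.
- by have [x' [_ _ /leq_trans /(_ hn)]] := nonvertex_step fx nvx.
have [x' [fx' lx' /leq_trans /(_ hn)]] := nonvertex_step fx nvx.
rewrite ltnS => /IH /(_ fx') [x'' [fx'' lx'' vx'']].
by exists x''; split => //; apply: le_trans lx' .
Qed.

Lemma vertex_active_inj x x' : vertex x -> active x = active x' -> x = x'.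
Proof.
move=> vx ea; pose d v := x' v - x v.
have x'E : x' = shift x d 1.
  by apply: functional_extensionality => v; rewrite shiftE mul1r addrC subrK.
have /vx d0 : forall j, j \in active x -> lin (h j) d = 0.
  move=> j ja; have := haff j x d 1; rewrite -x'E mul1r.
  have hx : h j x = 0 by move: ja; rewrite inE => /eqP.
  have hx' : h j x' = 0 by move: ja; rewrite ea inE => /eqP.
  by rewrite hx hx' add0r => <-.
rewrite x'E d0; apply: functional_extensionality => v.
by rewrite shiftE mulr0 addr0.
Qed.

Lemma affine_min_exists x0 : feasible x0 ->
  exists2 xs, feasible xs & forall x, feasible x -> f xs <= f x.
Proof.
move=> f0.
pose vertex_with A x := [/\ feasible x, active x = A & vertex x].
pose vertex_of A := epsilon (inhabits (vzero)) (vertex_with A).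
pose has_vertex A : bool :=
  if excluded_middle_informative (exists x, vertex_with A x) then true else false.
have vertex_ofP A : has_vertex A -> vertex_with A (vertex_of A).
  by rewrite /has_vertex; case: excluded_middle_informative => // ex _; exact: epsilon_spec.
have has_vertexP x : feasible x -> vertex x -> has_vertex (active x).
  by move=> fx vx; rewrite /has_vertex; case: excluded_middle_informative => // [[]]; exists x.
have [x1 [fx1 _ vx1]] := descend_to_vertex f0.
have [A vA Amin] := arg_minP (fun A => f (vertex_of A)) (has_vertexP _ fx1 vx1).
have [fA _ _] := vertex_ofP A vA.
exists (vertex_of A) => // x fx.
have [x' [fx' lx' vx']] := descend_to_vertex fx.
have vx'A := has_vertexP _ fx' vx'.
have [_ ea _] := vertex_ofP _ vx'A.
have ex' : vertex_of (active x') = x' by apply: esym; apply: vertex_active_inj => //; rewrite ea.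
by apply: le_trans (Amin _ vx'A) _; rewrite ex'.
Qed.

Lemma affine_min_slope_ge0 xs d : feasible xs -> (forall x, feasible x -> f xs <= f x) ->
  (forall j, h j xs = 0 -> lin (h j) d <= 0) -> 0 <= lin f d.
Proof.
move=> fxs opt hd; have [eps e0 fe] := feasible_shift fxs hd.
have := opt _ fe; rewrite faff => H; rewrite leNgt; apply/negP => hl.
by have := mulr_gt0 e0 (_ : 0 < - lin f d); rewrite oppr_gt0 => /(_ hl); lra.
Qed.

End AffineProgram.

Section SumInequalities.
Variable K : rcfType.

Lemma natr_b (b : bool) : (b%:R : K) = if b then 1 else 0.
Proof. by case: b. Qed.

Lemma sum_indicator (I : finType) (P : pred I) (b : I) :
  \sum_(k | P k) ((b == k)%:R : K) = (P b)%:R.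
Proof.
rewrite big_mkcond (bigD1 b) //= eqxx big1 ?addr0; first by case: (P b).
by move=> k kb; rewrite eq_sym (negbTE kb); case: (P k).
Qed.

Lemma sum_sqr_le_sqr_sum (I : finType) (P : pred I) (a : I -> K) :
  (forall r, P r -> 0 <= a r) -> \sum_(r | P r) a r ^+ 2 <= (\sum_(r | P r) a r) ^+ 2.
Proof.
move=> h; rewrite expr2 mulr_suml; apply: ler_sum => r Pr.
rewrite expr2; apply: ler_wpM2l; first exact: h.
by rewrite (bigD1 r) //= lerDl; apply: sumr_ge0 => s /andP[Ps _]; exact: h.
Qed.

Lemma norm1_le_norm2w (N : nat) (w u : 'I_N -> K) : (forall i, 0 < w i) ->
  norm1 u <= Num.sqrt (norm1 (fun i => (w i)^-1)) * norm2w w u.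
Proof.
move=> hw; set A := norm1 (fun i => (w i)^-1); set B := \sum_i w i * u i ^+ 2.
have A0 : 0 <= A by apply: sumr_ge0 => i _; exact: normr_ge0.
have B0 : 0 <= B by apply: sumr_ge0 => i _; apply: mulr_ge0; [apply: ltW|apply: sqr_ge0].
have S0 : 0 <= norm1 u by apply: sumr_ge0 => i _; exact: normr_ge0.
suff key : norm1 u ^+ 2 <= A * B.
  by rewrite /norm2w -sqrtrM // -(ger0_norm S0) -sqrtr_sqr ler_sqrt // mulr_ge0.
have AE : A = \sum_i (w i)^-1 by apply: eq_bigr => i _; rewrite ger0_norm // invr_ge0 ltW.
have AB : \sum_i \sum_j (w i)^-1 * (w j * u j ^+ 2) = A * B.
  by rewrite AE mulr_suml; apply: eq_bigr => i _; rewrite mulr_sumr.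
(* Summing [(w_j |u_j| - w_i |u_i|)^2 / (w_i w_j) >= 0] over all pairs. *)
have : 0 <= \sum_i \sum_j ((w i)^-1 * (w j * u j ^+ 2) + (w j)^-1 * (w i * u i ^+ 2)
                           - 2 * (`|u i| * `|u j|)).
  apply: sumr_ge0 => i _; apply: sumr_ge0 => j _.
  have wi := hw i; have wj := hw j.
  have -> : (w i)^-1 * (w j * u j ^+ 2) + (w j)^-1 * (w i * u i ^+ 2) - 2 * (`|u i| * `|u j|)
      = (w j * `|u j| - w i * `|u i|) ^+ 2 / (w i * w j).
    rewrite -(real_normK (num_real (u i))) -(real_normK (num_real (u j))).
    by field; apply/andP; split; apply: lt0r_neq0.
  by apply: divr_ge0; [apply: sqr_ge0 | apply: mulr_ge0; apply: ltW].
under eq_bigr => i _ do rewrite sumrB big_split /=.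
have BA : \sum_i \sum_j (w j)^-1 * (w i * u i ^+ 2) = A * B by rewrite exchange_big AB.
rewrite sumrB big_split /= AB BA.
have -> : \sum_i \sum_j 2 * (`|u i| * `|u j|) = 2 * norm1 u ^+ 2.
  by under eq_bigr => i _ do rewrite -!mulr_sumr; rewrite -mulr_sumr -mulr_suml expr2.
lra.
Qed.

End SumInequalities.

Lemma base_nonincident_eq0 (K : rcfType) (N : nat) (G : {set 'I_N} -> K) (u : 'I_N -> K) i :
  normalized G -> in_base G u -> ~~ incident G i -> u i = 0.
Proof.
move=> hn [hle htot] /existsPn ni.
have Gi (S : {set 'I_N}) : i \notin S -> G (i |: S) = G S.
  by move=> iS; move: (ni S); rewrite iS /= negbK => /eqP.
have up : u i <= 0.
  by have := hle [set i]; rewrite /setsum big_set1 -(setU0 [set i]) Gi ?inE // hn.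
have lo : 0 <= u i.
  have E : setsum u [set: 'I_N] = u i + setsum u ([set: 'I_N] :\ i).
    by rewrite /setsum (big_setD1 i).
  have := Gi ([set: 'I_N] :\ i) (negbT (setD11 _ _)); rewrite setD1K ?in_setT // => GT.
  by have := hle ([set: 'I_N] :\ i); lra.
lra.
Qed.

Section ExchangeGraph.
Variables (K : rcfType) (N M : nat) (F : 'I_M -> {set 'I_N} -> K).
Hypotheses (hnorm : forall r, normalized (F r)) (hsub : forall r, submodular (F r)).
Variables (x : 'I_M -> 'I_N -> K) (hx : forall r, in_base (F r) (x r)).

Lemma setsumUI (u : 'I_N -> K) S T :
  setsum u (S :|: T) + setsum u (S :&: T) = setsum u S + setsum u T.
Proof.
rewrite /setsum !(big_mkcond (fun i => i \in _)) -!big_split /=.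
apply: eq_bigr => k _; rewrite !inE.
by case: (k \in S); case: (k \in T); rewrite /= ?addr0 ?add0r.
Qed.

Definition tight r S := setsum (x r) S == F r S.

Lemma tightUI r S T : tight r S -> tight r T -> tight r (S :|: T) /\ tight r (S :&: T).
Proof.
rewrite /tight => /eqP hS /eqP hT.
have := setsumUI (x r) S T; have := hsub r S T.
have [hle _] := hx r; have := hle (S :|: T); have := hle (S :&: T).
by rewrite hS hT => *; split; apply/eqP; lra.
Qed.

Lemma tight0 r : tight r set0.
Proof. by rewrite /tight /setsum big_set0 hnorm. Qed.

Lemma tightT r : tight r setT.
Proof. by rewrite /tight; have [_ ->] := hx r. Qed.

Lemma tight_bigcap r (P : pred 'I_N) (G : 'I_N -> {set 'I_N}) :
  (forall a, P a -> tight r (G a)) -> tight r (\bigcap_(a | P a) G a).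
Proof.
move=> H; apply: (big_ind (tight r)) => //; first exact: tightT.
by move=> A B tA tB; have [] := tightUI tA tB.
Qed.

Lemma tight_bigcup r (P : pred 'I_N) (G : 'I_N -> {set 'I_N}) :
  (forall a, P a -> tight r (G a)) -> tight r (\bigcup_(a | P a) G a).
Proof.
move=> H; apply: (big_ind (tight r)) => //; first exact: tight0.
by move=> A B tA tB; have [] := tightUI tA tB.
Qed.

(* [x r] may move mass from [a] to [b] inside the base polytope of [F r]
   exactly when no [r]-tight set separates [b] from [a]. *)
Definition exchangeable r a b := [forall S, (tight r S && (b \in S)) ==> (a \in S)].
Definition exchange_edge := [rel a b | [exists r, exchangeable r a b]].

Lemma tight_exchange_closed r (U : {set 'I_N}) :
  (forall a b, b \in U -> a \notin U -> ~~ exchangeable r a b) -> tight r U.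
Proof.
move=> H.
pose Sab a b := odflt setT [pick S | tight r S && (b \in S) && (a \notin S)].
have HS a b : b \in U -> a \notin U ->
    [/\ tight r (Sab a b), b \in Sab a b & a \notin Sab a b].
  move=> bU aU; rewrite /Sab; case: pickP => [S /andP[/andP[-> ->] ->] //|nS].
  exfalso; move: (H a b bU aU); rewrite negb_forall => /existsP [S].
  by rewrite negb_imply => /andP[/andP[t bS] aS]; move: (nS S); rewrite t bS aS.
have -> : U = \bigcup_(b | b \in U) \bigcap_(a | a \notin U) Sab a b.
  apply/setP => k; apply/idP/idP.
    move=> kU; apply/bigcupP; exists k => //; apply/bigcapP => a aU.
    by have [] := HS a k kU aU.
  move=> /bigcupP [b bU /bigcapP kT]; apply: contraT => kU.
  by have [_ _] := HS k b bU kU; rewrite kT.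
apply: tight_bigcup => b bU; apply: tight_bigcap => a aU.
by have [] := HS a b bU aU.
Qed.

(* The set of nodes reaching [i] is tight for every [r], so its [x]-mass is its
   [F]-value, which bounds its [z]-mass. *)
Lemma exists_surplus_path (z : 'I_N -> K) (hz : in_base (sumF F) z) i :
  0 < z i - Aop x i -> exists j, connect exchange_edge j i /\ z j - Aop x j < 0.
Proof.
move=> hi; apply: NNPP => nex.
pose U := [set k | connect exchange_edge k i].
have tU r : tight r U.
  apply: tight_exchange_closed => a b; rewrite !inE => bi; apply: contra => c.
  by apply: connect_trans bi; apply: connect1; apply/existsP; exists r.
have e0 k : k \in U -> 0 <= z k - Aop x k.
  by rewrite inE => ki; rewrite leNgt; apply/negP => kl; apply: nex; exists k.
have sU : setsum (fun k => z k - Aop x k) U <= 0.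
  have [hle _] := hz; have := hle U.
  rewrite /setsum /sumF sumrB /Aop exchange_big /=.
  have -> : \sum_r \sum_(k in U) x r k = \sum_r F r U.
    by apply: eq_bigr => r _; move: (tU r) => /eqP.
  lra.
have : z i - Aop x i <= setsum (fun k => z k - Aop x k) U.
  rewrite /setsum (bigD1 i) ?inE ?connect0 //= lerDl.
  by apply: sumr_ge0 => k /andP[kU _]; exact: e0.
lra.
Qed.

Definition exchange_label a b : option 'I_M := [pick r | exchangeable r a b].

Lemma exchange_labelP a b r : exchange_label a b = Some r -> exchangeable r a b.
Proof. by rewrite /exchange_label; case: pickP => // r' H [<-]. Qed.

Lemma exchange_label_edge a b : exchange_edge a b -> exists r, exchange_label a b = Some r.
Proof.
rewrite /exchange_label; case: pickP => [r _|H]; first by exists r.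
by move=> /existsP [r c]; move: (H r); rewrite c.
Qed.

Lemma sum_exchange_label (Q : pred 'I_M) a b (c : K) :
  \sum_(r | Q r && (exchange_label a b == Some r)) c =
  if exchange_label a b is Some r0 then (if Q r0 then c else 0) else 0.
Proof.
case: (exchange_label a b) => [r0|]; last by rewrite big_pred0 // => r; rewrite andbF.
case Qr : (Q r0).
  rewrite (big_pred1 r0) // => r /=.
  by apply/idP/eqP => [/andP[_ /eqP [->]]|->] //; rewrite Qr eqxx.
by rewrite big_pred0 // => r /=; case: eqP => [[<-]|]; rewrite ?Qr ?andbF.
Qed.

Definition path_flow (j : 'I_N) (p : seq 'I_N) r k : K :=
  \sum_(ab <- zip (j :: p) p | exchange_label ab.1 ab.2 == Some r)
     ((ab.2 == k)%:R - (ab.1 == k)%:R).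

Lemma path_flow_setsum j p r (S : {set 'I_N}) :
  \sum_(k in S) path_flow j p r k =
  \sum_(ab <- zip (j :: p) p | exchange_label ab.1 ab.2 == Some r)
     ((ab.2 \in S)%:R - (ab.1 \in S)%:R).
Proof.
rewrite /path_flow exchange_big /=; apply: eq_bigr => ab _.
by rewrite sumrB !sum_indicator.
Qed.

Lemma path_flow_tight j p r S : tight r S -> \sum_(k in S) path_flow j p r k <= 0.
Proof.
move=> tS; rewrite path_flow_setsum.
apply: sumr_le0 => ab /eqP /exchange_labelP /forallP /(_ S).
rewrite tS /=; case: (ab.2 \in S) => /= [-> |_]; first by rewrite subrr.
by rewrite sub0r oppr_le0; case: (ab.1 \in S).
Qed.

Lemma path_flow_total j p r : \sum_(k in [set: 'I_N]) path_flow j p r k = 0.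
Proof. by rewrite path_flow_setsum big1 // => ab _; rewrite !inE subrr. Qed.

Lemma zip_path_edge j p ab :
  path exchange_edge j p -> ab \in zip (j :: p) p -> exchange_edge ab.1 ab.2.
Proof.
elim: p j => [//|q p IH] j /= /andP[e pp]; rewrite inE => /orP[/eqP -> //|].
exact: IH.
Qed.

Lemma telescope_zip (j : 'I_N) (p : seq 'I_N) (k : 'I_N) :
  \sum_(ab <- zip (j :: p) p) (((ab.2 == k)%:R : K) - (ab.1 == k)%:R) =
  (last j p == k)%:R - (j == k)%:R.
Proof.
elim: p j => [|q p IH] j; first by rewrite big_nil subrr.
by rewrite /= big_cons IH /=; ring.
Qed.

Lemma path_flow_col j p k : path exchange_edge j p ->
  \sum_r path_flow j p r k = (last j p == k)%:R - (j == k)%:R.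
Proof.
move=> pp; rewrite /path_flow.
under eq_bigr => r _ do rewrite big_mkcond.
rewrite exchange_big /= -telescope_zip; apply: eq_big_seq => ab abz.
have [r0 r0E] := exchange_label_edge (zip_path_edge pp abz).
by rewrite -big_mkcond (eq_bigl (fun r => exchange_label ab.1 ab.2 == Some r)) //
  (sum_exchange_label predT) r0E.
Qed.

Lemma zip_count_le (j : 'I_N) (p : seq 'I_N) (k : 'I_N) : uniq (j :: p) ->
  \sum_(ab <- zip (j :: p) p) ((ab.2 == k)%:R : K) <= 1 /\
  \sum_(ab <- zip (j :: p) p) ((ab.1 == k)%:R : K) <= 1.
Proof.
suff : uniq (j :: p) ->
    \sum_(ab <- zip (j :: p) p) ((ab.2 == k)%:R : K) <= (k \in p)%:R /\
    \sum_(ab <- zip (j :: p) p) ((ab.1 == k)%:R : K) <= (k \in j :: p)%:R.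
  by move=> H /H [c2 c1]; split; [apply: le_trans c2 _ | apply: le_trans c1 _];
    rewrite natr_b; case: ifP.
elim: p j => [|q p IH] j; first by rewrite !big_nil ler0n.
move=> /= /andP[jn /andP[qn up]].
have [IH2 IH1] := IH q (introT andP (conj qn up)).
rewrite !big_cons /=; split.
  move: IH2; case: (eqVneq q k) => [<-|qk].
    by rewrite (negbTE qn) mem_head !natr_b /=; lra.
  by rewrite in_cons eq_sym (negbTE qk) /= !natr_b /=; lra.
move: IH1; case: (eqVneq j k) => [<-|jk].
  by rewrite (negbTE jn) mem_head !natr_b /=; lra.
by rewrite (in_cons j) eq_sym (negbTE jk) !natr_b /=; lra.
Qed.

Lemma path_flow_sub_bound (j : 'I_N) (p : seq 'I_N) k (W : {set 'I_M}) : uniq (j :: p) ->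
  - 1 <= \sum_(r in W) path_flow j p r k <= 1.
Proof.
move=> up; have [c2 c1] := zip_count_le k up.
have -> : \sum_(r in W) path_flow j p r k =
   \sum_(ab <- zip (j :: p) p)
     (if exchange_label ab.1 ab.2 is Some r0 then
        (if r0 \in W then (ab.2 == k)%:R - (ab.1 == k)%:R else 0) else 0).
  rewrite /path_flow; under eq_bigr => r _ do rewrite big_mkcond.
  rewrite exchange_big /=; apply: eq_bigr => ab _.
  by rewrite -big_mkcondr sum_exchange_label.
apply/andP; split.
  rewrite lerNl; apply: le_trans c1; rewrite -sumrN; apply: ler_sum => ab _.
  case: (exchange_label _ _) => [r0|]; last by rewrite oppr0 ler0n.
  case: ifP => _; last by rewrite oppr0 ler0n.
  by rewrite opprB lerBlDr lerDl ler0n.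
apply: le_trans c2; apply: ler_sum => ab _.
case: (exchange_label _ _) => [r0|]; last by rewrite ler0n.
case: ifP => _; last by rewrite ler0n.
by rewrite lerBlDr lerDl ler0n.
Qed.

End ExchangeGraph.

Lemma bigmax_incident_ge0 (K : rcfType) (N M : nat) (F : 'I_M -> {set 'I_N} -> K)
  (theta : 'I_M -> 'I_N -> K) i :
  0 <= \big[Num.max/0]_(r | incident (F r) i) theta r i.
Proof. by elim/big_rec: _ => // r v _ v0; rewrite le_max v0 orbT. Qed.

Lemma norm1inf_ge0 (K : rcfType) (N M : nat) (F : 'I_M -> {set 'I_N} -> K)
  (theta : 'I_M -> 'I_N -> K) : 0 <= norm1inf F theta.
Proof. by apply: sumr_ge0 => i _; apply: bigmax_incident_ge0. Qed.

Section TransportProgram.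
Variables (K : rcfType) (N M : nat) (F : 'I_M -> {set 'I_N} -> K).
Hypotheses (hnorm : forall r, normalized (F r)) (hsub : forall r, submodular (F r)).
Variables (y : 'I_M -> 'I_N -> K) (hy : forall r, in_base (F r) (y r)).
Variables (z : 'I_N -> K) (hz : in_base (sumF F) z).

Local Notation V := (vec K ('I_M * 'I_N)%type).

Definition mat (x : V) : 'I_M -> 'I_N -> K := fun r i => x (r, i).
Definition residual i := z i - Aop y i.
Definition progress (x : V) := \sum_(k | 0 < residual k) (Aop (mat x) k - Aop y k).

(* The summands of [constraint] index, in order: the bounds [x_r(S) <= F_r(S)]
   and [x_r([N]) >= F_r([N])]; the upper and lower bounds on each column sum; and
   the spread constraint of a column, a set of rows and a sign. *)
Definition constraint :=
  ((('I_M * {set 'I_N}) + 'I_M) + ('I_N + 'I_N) + ('I_N * {set 'I_M} * bool))%type.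

Definition constr (c : constraint) : V -> K :=
  match c with
  | inl (inl (inl (r, A))) => fun x => \sum_(i in A) x (r, i) - F r A
  | inl (inl (inr r)) => fun x => F r setT - \sum_(i in [set: 'I_N]) x (r, i)
  | inl (inr (inl i)) => fun x => Aop (mat x) i - Aop y i - Num.max (residual i) 0
  | inl (inr (inr i)) => fun x => Aop y i + Num.min (residual i) 0 - Aop (mat x) i
  | inr (i, W, b) => fun x =>
      (if b then 1 else -1) * \sum_(r in W) (x (r, i) - y r i) - progress x
  end.

Definition objective (x : V) := - progress x.

Lemma Aop_mat_affine i : affine (fun x : V => Aop (mat x) i).
Proof. by apply: affine_sum => r; apply: affine_coord. Qed.

Lemma progress_affine : affine progress.
Proof.
by apply: affine_sum => k; apply: affineB; [apply: Aop_mat_affine | apply: affine_const].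
Qed.

Lemma constr_affine c : affine (constr c).
Proof.
case: c => [[[[r S]|r]|[i|i]]|[[i W] b]] /=.
- by apply: affineB; [apply: affine_sum => k; apply: affine_coord | apply: affine_const].
- by apply: affineB; [apply: affine_const | apply: affine_sum => k; apply: affine_coord].
- by apply: affineB; [apply: affineB; [apply: Aop_mat_affine | apply: affine_const]
                     | apply: affine_const].
- by apply: affineB; [apply: affine_const | apply: Aop_mat_affine].
apply: affineB; last exact: progress_affine.
apply: affineZ; apply: affine_sum => r.
by apply: affineB; [apply: affine_coord | apply: affine_const].
Qed.

Lemma objective_affine : affine objective.
Proof. exact/affineN/progress_affine. Qed.

Lemma sum_setT (g : 'I_N -> K) : \sum_(i in [set: 'I_N]) g i = \sum_i g i.
Proof. by apply: eq_bigl => i; rewrite inE. Qed.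

Lemma feasible_in_base (x : V) : feasible constr x -> forall r, in_base (F r) (mat x r).
Proof.
move=> fx r; split.
  by move=> S; have := fx (inl (inl (inl (r, S)))); rewrite /= /setsum; lra.
have := fx (inl (inl (inl (r, setT)))); have := fx (inl (inl (inr r))).
by rewrite /= /setsum; lra.
Qed.

Lemma feasible_bounded v : exists B, forall x : V, feasible constr x -> `|x v| <= B.
Proof.
case: v => r i; exists (`|F r [set i]| + `|F r setT - F r [set~ i]|) => x fx.
have [hle htot] := feasible_in_base fx r.
have up : x (r, i) <= F r [set i] by have := hle [set i]; rewrite /setsum big_set1.
have lo : F r setT - F r [set~ i] <= x (r, i).
  have E : \sum_(k in [set: 'I_N]) x (r, k) = x (r, i) + \sum_(k in [set~ i]) x (r, k).
    rewrite (big_setD1 i) ?inE //; congr (_ + _).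
    by apply: eq_bigl => k; rewrite !inE andbT.
  by have := hle [set~ i]; move: htot; rewrite /setsum /mat E; lra.
rewrite ler_norml; have := ler_norm (F r [set i]).
have := ler_norm (- (F r setT - F r [set~ i])); rewrite normrN.
have := normr_ge0 (F r [set i]); have := normr_ge0 (F r setT - F r [set~ i]).
by move=> *; apply/andP; split; lra.
Qed.

Lemma feasible_start : feasible constr (fun v => y v.1 v.2).
Proof.
case=> [[[[r S]|r]|[i|i]]|[[i W] b]] /=.
- by have [hle _] := hy r; have := hle S; rewrite /setsum /=; lra.
- by have [_ htot] := hy r; move: htot; rewrite /setsum /=; lra.
- by rewrite subrr sub0r oppr_le0 le_max lexx orbT.
- by rewrite addrAC subrr add0r ge_min lexx orbT.
rewrite big1 ?mulr0; last by move=> r _; rewrite subrr.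
by rewrite /progress big1 ?subrr // => k _; rewrite subrr.
Qed.

Lemma sum_Aop_base (x : 'I_M -> 'I_N -> K) : (forall r, in_base (F r) (x r)) ->
  \sum_i Aop x i = \sum_r F r setT.
Proof.
move=> hx; rewrite /Aop exchange_big; apply: eq_bigr => r _.
by have [_ <-] := hx r; rewrite /setsum sum_setT.
Qed.

Lemma sum_target : \sum_i z i = \sum_r F r setT.
Proof. by have [_ hzT] := hz; rewrite -sum_setT; exact: hzT. Qed.

Lemma sum_residual : \sum_i residual i = 0.
Proof. by rewrite /residual sumrB sum_Aop_base // sum_target subrr. Qed.

Lemma Aop_mat_vzero k : Aop (mat vzero) k = 0.
Proof. by rewrite /Aop big1. Qed.

Definition flow_dir (x : V) j p : V := fun v => path_flow F (mat x) j p v.1 v.2.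

Lemma Aop_flow_dir (x : V) j p k : path (exchange_edge F (mat x)) j p ->
  Aop (mat (flow_dir x j p)) k = (last j p == k)%:R - (j == k)%:R.
Proof. exact: path_flow_col. Qed.

Lemma lin_progress_flow_dir (x : V) i j p :
  path (exchange_edge F (mat x)) j p -> last j p = i ->
  0 < residual i -> residual j <= 0 -> lin progress (flow_dir x j p) = 1.
Proof.
move=> pp li posi posj.
rewrite /lin /progress -sumrB (eq_bigr (fun k => (i == k)%:R - (j == k)%:R)).
  by rewrite sumrB !sum_indicator posi ltNge posj subr0.
by move=> k _; rewrite Aop_flow_dir // li Aop_mat_vzero; ring.
Qed.

Section Optimum.
Variables (xs : V) (fxs : feasible constr xs).

Lemma residual_gt0 i : 0 < z i - Aop (mat xs) i -> 0 < residual i.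
Proof.
move=> hi; rewrite ltNge; apply/negP => ei; have := fxs (inl (inr (inr i))).
by rewrite /= min_l //; move: hi; rewrite /residual; lra.
Qed.

Lemma residual_le0 j : z j - Aop (mat xs) j < 0 -> residual j <= 0.
Proof.
move=> hj; rewrite leNgt; apply/negP => ej; have := fxs (inl (inr (inl j))).
by rewrite /= max_l; [move: hj; rewrite /residual; lra | exact: ltW].
Qed.

Lemma flow_dir_admissible i j p :
  0 < z i - Aop (mat xs) i -> z j - Aop (mat xs) j < 0 ->
  path (exchange_edge F (mat xs)) j p -> uniq (j :: p) -> last j p = i ->
  forall c, constr c xs = 0 -> lin (constr c) (flow_dir xs j p) <= 0.
Proof.
move=> hi hj pp up li; set d := flow_dir xs j p.
have colsum_d k : Aop (mat d) k = (i == k)%:R - (j == k)%:R by rewrite Aop_flow_dir ?li.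
case=> [[[[r S]|r]|[k|k]]|[[k W] b]] /=; rewrite /lin.
- move=> /eqP; rewrite subr_eq0 => tS; rewrite big1_eq sub0r opprK subrK.
  exact: (path_flow_tight (x := mat xs) j p tS).
- move=> _; rewrite big1_eq (eq_bigr (fun i => path_flow F (mat xs) j p r i)) //.
  by rewrite path_flow_total; lra.
- move=> act; rewrite Aop_mat_vzero colsum_d.
  case: (eqVneq i k) => [ik|ik]; last by rewrite !natr_b; case: (j == k); lra.
  move: act; rewrite -ik max_l; last exact/ltW/residual_gt0.
  by move: hi; rewrite /residual; lra.
- move=> act; rewrite Aop_mat_vzero colsum_d.
  case: (eqVneq j k) => [jk|jk]; last by rewrite !natr_b; case: (i == k); lra.
  move: act; rewrite -jk min_l; last exact: residual_le0.
  by move: hj; rewrite /residual; lra.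
move=> _; have := lin_progress_flow_dir pp li (residual_gt0 hi) (residual_le0 hj).
rewrite /lin -/d => lp.
have -> : \sum_(r in W) (d (r, k) - y r k) =
          \sum_(r in W) path_flow F (mat xs) j p r k + \sum_(r in W) (vzero (r, k) - y r k).
  by rewrite -big_split; apply: eq_bigr => r _; rewrite /d /flow_dir /vzero /=; ring.
have /andP[w1 w2] := path_flow_sub_bound F (mat xs) k W up.
by case: b; lra.
Qed.

Hypothesis opt : forall x, feasible constr x -> objective xs <= objective x.

Lemma target_le_Aop_opt i : z i <= Aop (mat xs) i.
Proof.
rewrite -subr_le0 leNgt; apply/negP => hi.
have [j [/connectP [p0 pp0 i_last] hj]] :=
  exists_surplus_path hnorm hsub (feasible_in_base fxs) hz hi.
move: i_last; case: (shortenP pp0) => p pp up _ /esym li.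
have lp := lin_progress_flow_dir pp li (residual_gt0 hi) (residual_le0 hj).
have := affine_min_slope_ge0 constr_affine objective_affine fxs opt
  (flow_dir_admissible hi hj pp up li).
by move: lp; rewrite /lin /objective; lra.
Qed.

Lemma Aop_opt : Aop (mat xs) = z.
Proof.
apply: functional_extensionality => i.
have S : \sum_k (z k - Aop (mat xs) k) = 0.
  by rewrite sumrB (sum_Aop_base (feasible_in_base fxs)) sum_target subrr.
have := target_le_Aop_opt i; rewrite (bigD1 i) //= in S.
have : \sum_(k | k != i) (z k - Aop (mat xs) k) <= 0.
  by apply: sumr_le0 => k _; rewrite subr_le0; exact: target_le_Aop_opt.
lra.
Qed.

Lemma progress_opt : progress xs = \sum_(k | 0 < residual k) residual k.
Proof. by apply: eq_bigr => k _; rewrite /residual Aop_opt. Qed.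

Lemma progress_opt_ge0 : 0 <= progress xs.
Proof. by rewrite progress_opt; apply: sumr_ge0 => k /ltW. Qed.

(* The residual sums to zero, so its positive and negative parts have equal mass. *)
Lemma norm1_residual_opt : norm1 (fun i => Aop y i - z i) = 2 * progress xs.
Proof.
rewrite progress_opt /norm1 (eq_bigr (fun i => `|residual i|)); last first.
  by move=> i _; rewrite /residual distrC.
have := sum_residual; rewrite (bigID (fun k => 0 < residual k)) /= => S.
rewrite (bigID (fun k => 0 < residual k)) /=.
have -> : \sum_(i | 0 < residual i) `|residual i| = \sum_(i | 0 < residual i) residual i.
  by apply: eq_bigr => k /ltW /ger0_norm.
have -> : \sum_(i | ~~ (0 < residual i)) `|residual i| = - \sum_(i | ~~ (0 < residual i)) residual i.
  by rewrite -sumrN; apply: eq_bigr => k; rewrite -leNgt => /ler0_norm.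
lra.
Qed.

(* The spread constraints for [W] the rows of positive, resp. negative, deviation. *)
Lemma column_deviation_sqr_le k : \sum_r (mat xs r k - y r k) ^+ 2 <= 2 * progress xs ^+ 2.
Proof.
pose dev r := mat xs r k - y r k.
have pos := fxs (inr (k, [set r | 0 < dev r], true)).
have neg := fxs (inr (k, [set r | ~~ (0 < dev r)], false)).
rewrite /= mul1r in pos; rewrite /= mulN1r in neg.
set a := \sum_(r in _) (xs (r, k) - y r k) in pos.
set b := \sum_(r in _) (xs (r, k) - y r k) in neg.
have aE : a = \sum_(r | 0 < dev r) dev r by apply: eq_bigl => r; rewrite inE.
have bE : - b = \sum_(r | ~~ (0 < dev r)) (- dev r).
  by rewrite /b -sumrN; apply: eq_bigl => r; rewrite inE.
have a0 : 0 <= a by rewrite aE; apply: sumr_ge0 => r /ltW.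
have b0 : 0 <= - b by rewrite bE; apply: sumr_ge0 => r; rewrite -leNgt oppr_ge0.
have sa : \sum_(r | 0 < dev r) dev r ^+ 2 <= a ^+ 2.
  by rewrite aE; apply: sum_sqr_le_sqr_sum => r /ltW.
have sb : \sum_(r | ~~ (0 < dev r)) dev r ^+ 2 <= (- b) ^+ 2.
  rewrite bE (eq_bigr (fun r => (- dev r) ^+ 2)) => [|r _]; last by rewrite sqrrN.
  by apply: sum_sqr_le_sqr_sum => r; rewrite -leNgt oppr_ge0.
have P0 := progress_opt_ge0.
have a2 : a ^+ 2 <= progress xs ^+ 2 by rewrite !expr2; apply: ler_pM => //; lra.
have b2 : (- b) ^+ 2 <= progress xs ^+ 2 by rewrite !expr2; apply: ler_pM => //; lra.
rewrite (bigID (fun r => 0 < dev r)) /=; rewrite /dev in sa sb; lra.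
Qed.

Lemma weighted_deviation_le (theta : 'I_M -> 'I_N -> K) :
  \sum_r \sum_i theta r i * (mat xs r i - y r i) ^+ 2
    <= norm1inf F theta * (2 * progress xs ^+ 2).
Proof.
rewrite exchange_big /norm1inf mulr_suml; apply: ler_sum => i _.
set m := \big[Num.max/0]_(r | incident (F r) i) theta r i.
have m0 : 0 <= m by apply: bigmax_incident_ge0.
apply: le_trans (_ : m * \sum_r (mat xs r i - y r i) ^+ 2 <= _); last first.
  by apply: ler_wpM2l => //; apply: column_deviation_sqr_le.
rewrite mulr_sumr; apply: ler_sum => r _.
have [inc|ninc] := boolP (incident (F r) i).
  by apply: ler_wpM2r; [exact: sqr_ge0 | exact: le_bigmax_cond].
rewrite (base_nonincident_eq0 (hnorm r) (feasible_in_base fxs r) ninc).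
by rewrite (base_nonincident_eq0 (hnorm r) (hy r) ninc) subrr expr2 !mulr0.
Qed.

Lemma norm2theta_opt_le (theta : 'I_M -> 'I_N -> K) :
  norm2theta theta (fun r i => mat xs r i - y r i)
    <= Num.sqrt (norm1inf F theta / 2) * norm1 (fun i => Aop y i - z i).
Proof.
set n := norm1inf F theta; set P := progress xs.
have P0 : 0 <= P := progress_opt_ge0.
have n0 : 0 <= n by apply: norm1inf_ge0.
rewrite norm1_residual_opt -/P -(ger0_norm (_ : 0 <= 2 * P)); last lra.
rewrite -sqrtr_sqr -sqrtrM ?divr_ge0 // /norm2theta.
rewrite ler_sqrt ?mulr_ge0 ?divr_ge0 ?sqr_ge0 ?invr_ge0 ?ler0n //.
apply: le_trans (weighted_deviation_le theta) _.
by rewrite -/n -/P le_eqVlt; apply/orP; left; apply/eqP; field.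
Qed.

End Optimum.

End TransportProgram.

Unset Implicit Arguments.

Theorem lemma3p1 (K : rcfType) (N M : nat)
  (F : 'I_M -> {set 'I_N} -> K)
  (hnorm : forall r, normalized (F r))
  (hsub : forall r, submodular (F r))
  (hcover : forall i : 'I_N, exists r : 'I_M, incident (F r) i)
  (theta : 'I_M -> 'I_N -> K) (htheta : forall r i, 0 < theta r i)
  (w : 'I_N -> K) (hw : forall i, 0 < w i)
  (y : 'I_M -> 'I_N -> K) (hy : forall r, in_base (F r) (y r))
  (z : 'I_N -> K) (hz : in_base (sumF F) z) :
  exists xi : 'I_M -> 'I_N -> K,
    (forall r, in_base (F r) (xi r)) /\
    Aop xi = z /\
    norm2theta theta (fun r i => xi r i - y r i)
      <= Num.sqrt (norm1inf F theta / 2) * norm1 (fun i => Aop y i - z i) /\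
    norm2theta theta (fun r i => xi r i - y r i)
      <= Num.sqrt (norm1inf F theta * norm1 (fun i => (w i)^-1) / 2)
         * norm2w w (fun i => Aop y i - z i).
Proof.
have [xs fxs opt] := affine_min_exists (constr_affine F y z) (objective_affine y z)
  (feasible_bounded F y z) (feasible_start hy z).
have bound1 := norm2theta_opt_le hnorm hsub hy hz fxs opt theta.
exists (mat xs); split; first exact: feasible_in_base.
split; first exact: (Aop_opt hnorm hsub hz fxs opt).
split => //; apply: le_trans bound1 _.
have n0 : 0 <= norm1inf F theta / 2 by rewrite divr_ge0 ?norm1inf_ge0.
rewrite mulrAC (sqrtrM _ n0) -mulrA ler_wpM2l ?sqrtr_ge0 //.
exact: norm1_le_norm2w.
Qed.
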